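(* Let $\mathcal H=\bigcup_{i\ge0}H_i$ be a Level-Prim tree. Then: (a) $\mathcal H$ is a spanning tree of $V$, and along every path in $\mathcal H$ from $r$ to a leaf, the levels of the vertices are non-decreasing; (b) for every $i\ge0$, $\sum_{j\ge i} d(H_j)\le 8\cdot \mathrm{MST}(G/V_{<i})$.
   Context: Let $(V,d)$ be a finite metric with root $r\in V$, and fix $M>0$. Levels: $V_0=\{u: d(r,u)\le M\}$, and for $i\ge1$, $V_i=\{u: 2^{i-1}M<d(r,u)\le 2^iM\}$. A vertex of $V_i$ has level $i$. Write $V_{\le i}=\bigcup_{j\le i}V_j$ and $V_{<i}=V_{\le i-1}$, with $V_{<0}=\emptyset$. Graphs: $G$ is the complete graph on $V$ with edge weights $d$. $G[U]$ is the induced subgraph on $U$. $G/U$ is the multigraph obtained by contracting $U$ to a single vertex, keeping parallel edges; $G/\emptyset=G$. $\mathrm{MST}(\cdot)$ denotes the weight of a minimum spanning tree, and $d(F)$ is the total weight of an edge set $F$. Level-Prim tree: for each $i\ge0$, let $H_i$ be a minimum spanning tree of $G[V_{\le i}]/V_{<i}$, viewed as a set of edges of $G$. Then $\mathcal H=\bigcup_{i\ge0}H_i$. *)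

From HB Require Import structures.
From mathcomp Require Import all_boot all_order all_algebra.
From Stdlib Require Import ClassicalEpsilon.
Set Implicit Arguments. Unset Strict Implicit. Unset Printing Implicit Defensive.
Import Order.TTheory GRing.Theory Num.Theory.
Local Open Scope ring_scope.

Definition is_metric (R : numDomainType) (V : finType) (d : V -> V -> R) : Prop :=
  [/\ forall x, d x x = 0,
      forall x y, d x y = 0 -> x = y,
      forall x y, d x y = d y x,
      forall x y, 0 <= d x y &
      forall x y z, d x z <= d x y + d y z].

Definition in_level (R : numDomainType) (V : finType) (d : V -> V -> R)
    (r : V) (M : R) (i : nat) (u : V) : bool :=
  if i is i'.+1 then (2%:R ^+ i' * M < d r u) && (d r u <= 2%:R ^+ i * M)
  else d r u <= M.

Definition V_le (R : numDomainType) (V : finType) (d : V -> V -> R) r M (i : nat)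
  : {set V} := [set u | [exists j : 'I_i.+1, in_level d r M j u]].
Definition V_lt (R : numDomainType) (V : finType) (d : V -> V -> R) r M (i : nat)
  : {set V} := [set u | [exists j : 'I_i, in_level d r M j u]].

(* Edges of the complete graph G: 2-element subsets of V. *)
Definition is_edge (V : finType) (e : {set V}) : bool := #|e| == 2%N.

Definition edge_w (R : numDomainType) (V : finType) (d : V -> V -> R) (e : {set V}) : R :=
  match [pick x in e] with
  | Some x => match [pick y in e :\ x] with Some y => d x y | None => 0 end
  | None => 0
  end.

Definition wF (R : numDomainType) (V : finType) (d : V -> V -> R)
    (F : {set {set V}}) : R := \sum_(e in F) edge_w d e.

(* Adjacency in the multigraph (V, F) restricted to W, with U contracted to
   a single vertex: x, y are adjacent if {x,y} in F, or if both lie in U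
   (i.e. they are the same vertex of the contracted graph). *)
Definition crel (V : finType) (W U : {set V}) (F : {set {set V}}) : rel V :=
  fun x y => [&& x \in W, y \in W & ([set x; y] \in F) || ((x \in U) && (y \in U))].

(* F (a set of edges of G) is a spanning tree of G[W]/U:
   edges of G[W]; connected; acyclic (no edge -- including loops, i.e. edges
   inside U -- lies on a cycle of the contracted multigraph). *)
Definition is_st (V : finType) (W U : {set V}) (F : {set {set V}}) : Prop :=
  [/\ forall e, e \in F -> is_edge e && (e \subset W),
      forall x y, x \in W -> y \in W -> connect (crel W U F) x y &
      forall e x y, e \in F -> e = [set x; y] -> ~~ connect (crel W U (F :\ e)) x y].

Definition is_mst (R : numDomainType) (V : finType) (d : V -> V -> R)
    (W U : {set V}) (F : {set {set V}}) : Prop :=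
  is_st W U F /\ forall T, is_st W U T -> wF d F <= wF d T.

Definition pbool (P : Prop) : bool := if excluded_middle_informative P then true else false.

Definition Hunion (V : finType) (H : nat -> {set {set V}}) : {set {set V}} :=
  [set e | pbool (exists i, e \in H i)].

Definition is_leaf (V : finType) (F : {set {set V}}) (x : V) : bool :=
  #|[set e in F | x \in e]| == 1%N.

Definition levels_nondecr (R : numDomainType) (V : finType) (d : V -> V -> R)
    (r : V) (M : R) (s : seq V) : Prop :=
  forall k : nat, (k.+1 < size s)%N ->
    forall i j : nat, in_level d r M i (nth r s k) -> in_level d r M j (nth r s k.+1) ->
      (i <= j)%N.

From HB Require Import structures.
From mathcomp Require Import all_boot all_order all_algebra lra.
From Stdlib Require Import ClassicalEpsilon.
Import Order.TTheory GRing.Theory Num.Theory.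
Set Implicit Arguments. Unset Strict Implicit. Unset Printing Implicit Defensive.
Local Open Scope ring_scope.

(* (a) An edge of H_i joins a vertex of level i to a vertex of level at most i:
   an edge inside V_{<i} would be a loop of G[V_{<=i}]/V_{<i}.  Hence a simple
   path of the union whose ends lie below level L never reaches level L: at its
   highest level L' it enters through an edge ab of H_{L'}, and the rest of the
   path, whose lower edges are contracted into V_{<L'}, reconnects b to a in
   H_{L'} without ab.  This gives acyclicity and monotone levels along paths
   from r; connectivity follows by induction on the level.

   (b) Fix j >= i and let E_j be the edges of T with an end at level j or j+1.
   Doubling E_j gives closed tours of total length <= 2 d(E_j), every edge of
   E_j inside one tour.  Walking along T from a vertex of level <= j towards
   V_{<i} one stays in a single tour until dropping below level j or meeting a
   vertex of level >= j+2, which is farther than r from every vertex of level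
   <= j.  Shortcutting each tour to its vertices of level <= j, with r in place
   of a far vertex, therefore spans G[V_{<=j}]/V_{<j} at cost <= 2 d(E_j), so
   d(H_j) <= 2 d(E_j); and an edge lies in at most four of the E_j. *)

Lemma sum_iota_pred_le_size (s : seq nat) (P : pred nat) m n :
  (forall j, P j -> j \in s) -> (\sum_(m <= j < n) P j <= size s)%N.
Proof.
move=> P_s; apply: (@leq_trans (count (fun j => j \in s) (index_iota m n))).
  rewrite -sumn_count sumnE big_map; apply: leq_sum => j _.
  by case: (boolP (P j)) => // /P_s ->.
rewrite -size_filter; apply: uniq_leq_size => [|x]; first by rewrite filter_uniq ?iota_uniq.
by rewrite mem_filter => /andP[].
Qed.

Section LevelPrim.
Variables (R : archiRealFieldType) (V : finType) (d : V -> V -> R) (r : V) (M : R).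
Hypothesis d_metric : is_metric d.
Hypothesis M_gt0 : 0 < M.

Lemma metric_refl x : d x x = 0. Proof. by case: d_metric. Qed.
Lemma metric_sym x y : d x y = d y x. Proof. by case: d_metric. Qed.
Lemma metric_ge0 x y : 0 <= d x y. Proof. by case: d_metric. Qed.
Lemma metric_triangle x y z : d x z <= d x y + d y z. Proof. by case: d_metric. Qed.

Definition radius (j : nat) : R := 2%:R ^+ j * M.

Lemma radiusS j : radius j.+1 = radius j + radius j.
Proof. by rewrite /radius exprS -mulrA mulr_natl mulr2n. Qed.

Lemma radius_le i j : (i <= j)%N -> radius i <= radius j.
Proof. by move=> ij; rewrite ler_pM2r // ler_eXn2l // ltr1n. Qed.

Lemma in_level_exists x : exists j, in_level d r M j x.
Proof.
have /archi_boundP : 0 <= d r x / M by rewrite divr_ge0 ?metric_ge0 ?ltW.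
set n := Num.Def.archi_bound _ => ltn.
have : d r x <= radius n.
  rewrite -ler_pdivrMr // ltW // (lt_le_trans ltn) //.
  by rewrite -natrX ler_nat ltnW // ltn_expl.
elim: n {ltn} => [|n IHn] le_n.
  by exists 0%N; rewrite /= -[M]mul1r -(expr0 2%:R).
have [le_n'|gt_n] := leP (d r x) (radius n); first exact: IHn.
by exists n.+1; rewrite /= gt_n.
Qed.

Definition level x : nat := ex_minn (in_level_exists x).

Lemma in_level_le_radius j x : in_level d r M j x -> d r x <= radius j.
Proof. by case: j => [|j] /=; [rewrite /radius expr0 mul1r | case/andP]. Qed.

Lemma in_level_gt_radius i j x : (i < j)%N -> in_level d r M j x -> radius i < d r x.
Proof. by case: j => [//|j] /= ij /andP[lt_jx _]; apply: le_lt_trans lt_jx; exact: radius_le. Qed.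

Lemma in_level_level x : in_level d r M (level x) x.
Proof. by rewrite /level; case: ex_minnP. Qed.

Lemma in_levelP j x : in_level d r M j x -> level x = j.
Proof.
move=> xj; have xl := in_level_level x.
have [lt_lj|lt_jl|//] := ltngtP (level x) j.
  by have := in_level_gt_radius lt_lj xj; rewrite ltNge in_level_le_radius.
by have := in_level_gt_radius lt_jl xl; rewrite ltNge in_level_le_radius.
Qed.

Lemma dist_root_le_radius j x : (level x <= j)%N -> d r x <= radius j.
Proof.
by move=> lj; apply: le_trans (radius_le lj); apply: in_level_le_radius (in_level_level x).
Qed.

Lemma radius_lt_dist_root j x : (j < level x)%N -> radius j < d r x.
Proof. by move=> jl; apply: in_level_gt_radius jl (in_level_level x). Qed.

Lemma level_root : level r = 0%N.
Proof. by apply: in_levelP; rewrite /= metric_refl ltW. Qed.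

Lemma mem_V_le i x : (x \in V_le d r M i) = (level x <= i)%N.
Proof.
rewrite inE; apply/existsP/idP => [[j /in_levelP ->]|lxi]; first by rewrite -ltnS.
by exists (Ordinal (lxi : (level x < i.+1)%N)); apply: in_level_level.
Qed.

Lemma mem_V_lt i x : (x \in V_lt d r M i) = (level x < i)%N.
Proof.
rewrite inE; apply/existsP/idP => [[j /in_levelP ->]|lxi]; first exact: ltn_ord.
by exists (Ordinal lxi); apply: in_level_level.
Qed.

Lemma pboolP (P : Prop) : reflect P (pbool P).
Proof. by rewrite /pbool; case: excluded_middle_informative => h; constructor. Qed.

Lemma mem_Hunion (H : nat -> {set {set V}}) e :
  reflect (exists i, e \in H i) (e \in Hunion H).
Proof. by rewrite inE; apply: pboolP. Qed.

Lemma crel_sym (W U : {set V}) F : symmetric (crel W U F).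
Proof.
move=> x y; rewrite /crel setUC.
by case: (x \in W); case: (y \in W) => //=; rewrite andbC.
Qed.

Lemma connect_crel_sym (W U : {set V}) F : connect_sym (crel W U F).
Proof. exact/sym_connect_sym/crel_sym. Qed.

Lemma crel_setT0 F : crel [set: V] set0 F =2 (fun x y => [set x; y] \in F).
Proof. by move=> x y; rewrite /crel !inE /= orbF. Qed.

Lemma connect_set2_sym (F : {set {set V}}) : connect_sym (fun x y => [set x; y] \in F).
Proof. by apply: sym_connect_sym => x y; rewrite setUC. Qed.

Lemma connect_backward_ind (e : rel V) (P : V -> Prop) x y :
  (forall u v, e u v -> P v -> P u) -> P y -> connect e x y -> P x.
Proof.
move=> P_back Py /connectP[p xp y_eq]; subst y.
elim: p x xp Py => //= z p IHp x /andP[xz zp] Py.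
exact: P_back xz (IHp z zp Py).
Qed.

Lemma is_edge_set2 (x y : V) : is_edge [set x; y] = (x != y).
Proof. by rewrite /is_edge cards2; case: (x != y). Qed.

Lemma edge_w_set2 a b : a != b -> edge_w d [set a; b] = d a b.
Proof.
move=> ab; rewrite /edge_w.
case: pickP => [x /set2P[->|->]|/(_ a)]; last by rewrite set21.
  case: pickP => [y|/(_ b)]; last by rewrite !inE eqxx orbT eq_sym ab.
  by rewrite !inE => /andP[/negPf ->] /= /eqP ->.
case: pickP => [y|/(_ a)]; last by rewrite !inE eqxx ab.
by rewrite !inE => /andP[/negPf ->]; rewrite orbF => /eqP ->; rewrite metric_sym.
Qed.

Lemma edge_w_set2_le a b : edge_w d [set a; b] <= d a b.
Proof.
have [<-|ab] := eqVneq a b; last by rewrite edge_w_set2.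
rewrite /edge_w setUid; case: pickP => [x xa|_]; last exact: metric_ge0.
case: pickP => [y|_]; last exact: metric_ge0.
by move: xa; rewrite !inE => /eqP -> /andP[/negP ya /eqP ya']; rewrite ya' eqxx in ya.
Qed.

Lemma edge_w_ge0 e : 0 <= edge_w d e.
Proof.
rewrite /edge_w; case: pickP => [x _|_] //.
by case: pickP => [y _|_] //; apply: metric_ge0.
Qed.

Lemma wF_subset (A B : {set {set V}}) : A \subset B -> wF d A <= wF d B.
Proof.
move=> AB; rewrite /wF [X in _ <= X](big_setID A) /= (setIidPr AB) lerDl.
by apply: sumr_ge0 => e _; apply: edge_w_ge0.
Qed.

Lemma wF_setU1 e (A : {set {set V}}) : wF d (e |: A) <= edge_w d e + wF d A.
Proof.
have [eA|eA] := boolP (e \in A); last by rewrite /wF big_setU1.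
by rewrite (setUidPr _) ?sub1set // lerDr edge_w_ge0.
Qed.

Lemma connect_crel_setD1 (W U : {set V}) F e x y :
  e = [set x; y] -> connect (crel W U (F :\ e)) x y ->
  forall a b, connect (crel W U F) a b -> connect (crel W U (F :\ e)) a b.
Proof.
move=> exy cxy; apply: connect_sub => a b /and3P[aW bW /orP[abF|abU]]; last first.
  by apply: connect1; rewrite /crel aW bW abU orbT.
have [abe|abe] := eqVneq [set a; b] e; last first.
  by apply: connect1; rewrite /crel aW bW !inE abe abF.
have ab_xy z : z \in [set a; b] -> z \in [set x; y] by rewrite abe exy.
have /set2P[ax|ax] := ab_xy a (set21 a b); have /set2P[bx|bx] := ab_xy b (set22 a b);
  by rewrite ax bx ?connect0 // connect_crel_sym.
Qed.

Lemma mst_wF_le (W U : {set V}) (T F : {set {set V}}) : is_mst d W U T ->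
  (forall e, e \in F -> is_edge e && (e \subset W)) ->
  (forall x y, x \in W -> y \in W -> connect (crel W U F) x y) ->
  wF d T <= wF d F.
Proof.
move=> [_ minT] edgesF spanF.
pose spans (F' : {set {set V}}) := [forall x in W, forall y in W, connect (crel W U F') x y].
have /minset_exists[F' /minsetP[spanF' minF'] F'F] : spans F.
  by apply/forall_inP => x xW; apply/forall_inP => y yW; apply: spanF.
apply: le_trans (wF_subset F'F); apply: minT; split.
- by move=> e /(subsetP F'F); apply: edgesF.
- by move=> x y xW yW; have /forall_inP/(_ x xW)/forall_inP := spanF'; apply.
move=> e x y eF' exy; apply/negP => cxy.
suff /setP/(_ e) : F' :\ e = F' by rewrite !inE eqxx eF'.
apply: minF' (subD1set F' e); apply/forall_inP => a aW; apply/forall_inP => b bW.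
apply: (connect_crel_setD1 exy cxy).
by have /forall_inP/(_ a aW)/forall_inP := spanF'; apply.
Qed.

(** * Part (a): the union of the level trees *)

Section TreeUnion.
Variable H : nat -> {set {set V}}.
Hypothesis H_mst : forall i, is_mst d (V_le d r M i) (V_lt d r M i) (H i).

Local Notation Hrel := (fun x y => [set x; y] \in Hunion H).

(* An edge of H i inside V_lt i would be a loop of the contracted graph. *)
Lemma H_edge_levels i x y : [set x; y] \in H i ->
  [/\ x != y, (level x <= i)%N, (level y <= i)%N & (level x == i) || (level y == i)].
Proof.
move=> xyH; have [[H_edges _ H_acyclic] _] := H_mst i.
have /andP[+ /subsetP xy_le] := H_edges _ xyH; rewrite is_edge_set2 => xy.
rewrite -!mem_V_le !xy_le ?set21 ?set22 //; split=> //.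
apply/negPn/negP => /norP[xi yi]; move: (H_acyclic _ _ _ xyH erefl) => /negP; apply.
apply: connect1; rewrite /crel !mem_V_le !mem_V_lt !ltn_neqAle xi yi.
by rewrite -!mem_V_le !xy_le ?set21 ?set22 ?orbT.
Qed.

(* Below level L, an edge of some H l with l < L joins two vertices of
   V_lt L, so it becomes a loop of the contraction at level L. *)
Lemma Hpath_connect_contracted L f b s :
  path (fun u v => Hrel u v && ([set u; v] != f)) b s ->
  all (fun x => level x <= L)%N (b :: s) ->
  connect (crel (V_le d r M L) (V_lt d r M L) (H L :\ f)) b (last b s).
Proof.
elim: s b => [|c s IHs] b /=; first by rewrite connect0.
move=> /andP[/andP[/mem_Hunion[l bcH] bcf] cs] /and3P[bL cL sL].
apply: connect_trans (IHs c cs _); last by rewrite /= cL.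
have [_ bl cl /orP lL] := H_edge_levels bcH.
have {}lL : (l <= L)%N by case: lL => /eqP <-.
apply: connect1; rewrite /crel !mem_V_le bL cL /= !mem_V_lt.
case: (ltngtP l L) lL => // [lL|<-] _; last by rewrite !inE bcf bcH.
by rewrite (leq_ltn_trans bl lL) (leq_ltn_trans cl lL) orbT.
Qed.

(* Otherwise the path, closed through the contracted V_lt (level b), would
   reconnect b to a in H (level b) without the edge [a; b]. *)
Lemma Hpath_no_return a b s : Hrel a b -> (level a < level b)%N ->
  path Hrel b s -> a \notin b :: s -> all (fun x => level x <= level b)%N (b :: s) ->
  (level (last b s) < level b)%N -> False.
Proof.
move=> /mem_Hunion[l abH] ab bs a_out bs_le last_lt.
have [_ al bl /orP[/eqP al_eq|/eqP bl_eq]] := H_edge_levels abH.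
  by move: (leq_trans ab bl); rewrite al_eq ltnn.
subst l; have [[_ _ H_acyclic] _] := H_mst (level b).
have bs' : path (fun u v => Hrel u v && ([set u; v] != [set a; b])) b s.
  apply: (sub_in_path (P := [predC [set a]])) bs.
    move=> x y xa ya xy; rewrite xy; apply/negP => /eqP/setP/(_ a).
    by rewrite set21 !inE; move: xa ya; rewrite !inE ![a == _]eq_sym => /negPf-> /negPf->.
  by apply/allP => x xs; rewrite !inE; apply: contraNneq a_out => <-.
move: (H_acyclic _ b a abH (setUC _ _)) => /negP; apply.
apply: connect_trans (Hpath_connect_contracted bs' bs_le) (connect1 _).
by rewrite /crel !mem_V_le !mem_V_lt al last_lt ab (ltnW last_lt) orbT.
Qed.

(* Look at the first vertex of the path reaching its highest level. *)
Lemma Hpath_level_lt L u p : path Hrel u p -> uniq (u :: p) ->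
  (level u < L)%N -> (level (last u p) < L)%N -> all (fun x => level x < L)%N (u :: p).
Proof.
move=> up up_uniq lu_lt llast_lt; apply/allP => z zp; rewrite ltnNge; apply/negP => Lz.
case: (@arg_maxnP V u [pred x in u :: p] level (mem_head u p)) => y yp y_top.
have Ly : (L <= level y)%N := leq_trans Lz (y_top z zp).
have [s1 [b [s2 [up_eq yb low_s1]]]] : exists s1 b s2, [/\ u :: p = rcons s1 b ++ s2,
    (level y <= level b)%N & ~~ has (fun x => level y <= level x)%N s1].
  have yp' : has (fun x => level y <= level x)%N (u :: p) by apply/hasP; exists y.
  by case: (split_find yp') => b s1 s2 *; exists s1, b, s2.
case: s1 up_eq low_s1 => [[ub _]|a0 s1 [<- p_eq] low_s1].
  by move: (leq_trans (leq_trans lu_lt Ly) yb); rewrite ub ltnn.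
have lb : level b = level y.
  apply/eqP; rewrite eqn_leq yb andbT; apply: y_top.
  by rewrite p_eq !inE mem_cat mem_rcons mem_head !orbT.
move: up up_uniq llast_lt; rewrite p_eq cat_path rcons_path last_cat last_rcons.
move=> /andP[/andP[_ ab] bs2] up_uniq last_lt.
apply: (Hpath_no_return ab _ bs2).
- rewrite lb ltnNge; apply: contra low_s1 => ly_le.
  by apply/hasP; exists (last u s1); first exact: mem_last.
- move: up_uniq; rewrite -cat_cons -rcons_cons cat_uniq rcons_uniq.
  move=> /and3P[/andP[b_out _] s2_out _]; have a_in := mem_last u s1.
  rewrite inE negb_or; apply/andP; split; first by apply: contraNneq b_out => <-.
  apply: contra s2_out => a_s2; apply/hasP; exists (last u s1) => //.
  by rewrite mem_rcons in_cons a_in orbT.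
- apply/allP => x; rewrite lb inE => /orP[/eqP->|xs]; first by rewrite lb.
  by apply: y_top; rewrite /= p_eq inE mem_cat xs !orbT.
- by rewrite lb (leq_trans last_lt Ly).
Qed.

Lemma Hunion_connect_root x : connect Hrel x r.
Proof.
have [n] := ubnP (level x); elim: n x => // n IHn x lxn.
have [[_ H_span _] _] := H_mst (level x).
have := H_span x r; rewrite !mem_V_le level_root => /(_ (leqnn _) isT).
apply: connect_sub => y z /and3P[_ _ /orP[yzH|/andP[]]].
  by apply: connect1; apply/mem_Hunion; exists (level x).
rewrite !mem_V_lt => ylt zlt.
apply: connect_trans (IHn y (leq_trans ylt lxn)) _.
by rewrite connect_set2_sym; apply: IHn (leq_trans zlt lxn).
Qed.

Lemma Hunion_acyclic e x y : e \in Hunion H -> e = [set x; y] ->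
  ~~ connect (fun u v => [set u; v] \in Hunion H :\ e) x y.
Proof.
move=> /mem_Hunion[l eH] exy; apply/negP => /connectP[p xp].
case: (shortenP xp) => {p xp} p xp p_uniq _ y_last.
have [[_ _ H_acyclic] _] := H_mst l.
have xyH : [set x; y] \in H l by rewrite -exy.
have [_ xl yl _] := H_edge_levels xyH.
have Hp : path Hrel x p by apply: sub_path xp => u v; rewrite inE => /andP[].
have /(Hpath_level_lt Hp p_uniq) p_low : (level x < l.+1)%N by [].
have /p_low p_le : (level (last x p) < l.+1)%N by rewrite -y_last.
move: (H_acyclic _ _ _ eH exy) => /negP; apply; rewrite y_last.
by apply: Hpath_connect_contracted p_le; apply: sub_path xp => u v; rewrite !inE andbC.
Qed.

Lemma Hunion_is_st : is_st [set: V] set0 (Hunion H).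
Proof.
split=> [e /mem_Hunion[i eH]|x y _ _|e x y eH exy]; rewrite ?(eq_connect (crel_setT0 _)).
- by have [[H_edges _ _] _] := H_mst i; case/andP: (H_edges _ eH) => -> _; rewrite subsetT.
- apply: connect_trans (Hunion_connect_root x) _.
  by rewrite connect_set2_sym; apply: Hunion_connect_root.
- exact: Hunion_acyclic.
Qed.

Lemma Hpath_levels_nondecr p : path Hrel r p -> uniq (r :: p) -> levels_nondecr d r M (r :: p).
Proof.
move=> rp rp_uniq k lt_k i j /in_levelP <- /in_levelP <-.
have take_rp : take k.+2 (r :: p) = r :: take k.+1 p by [].
have lt_kp : (k < size p)%N by [].
have last_take : last r (take k.+1 p) = nth r (r :: p) k.+1.
  by rewrite (last_nth r) size_takel // -take_rp nth_take.
have q_uniq : uniq (r :: take k.+1 p) by rewrite -take_rp take_uniq.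
have : all (fun x => level x < (level (nth r (r :: p) k.+1)).+1)%N (r :: take k.+1 p).
  by apply: Hpath_level_lt (take_path k.+1 rp) q_uniq _ _; rewrite ?level_root ?last_take.
move/allP; apply; rewrite -take_rp -(nth_take _ (ltnW (ltnSn k.+1))).
by rewrite mem_nth // size_takel.
Qed.

End TreeUnion.

(** * Closed tours *)

Fixpoint walk_len (x : V) (s : seq V) : R :=
  if s is y :: s' then d x y + walk_len y s' else 0.

Definition tour_len (s : seq V) : R := if s is x :: _ then walk_len (last x s) s else 0.

Lemma walk_len_cat x s1 s2 : walk_len x (s1 ++ s2) = walk_len x s1 + walk_len (last x s1) s2.
Proof. by elim: s1 x => [|y s1 IHs] x /=; rewrite ?add0r // IHs addrA. Qed.

Lemma walk_len_ge0 x s : 0 <= walk_len x s.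
Proof. by elim: s x => [|y s IHs] x //=; rewrite addr_ge0 ?metric_ge0. Qed.

Lemma walk_len_via x y s : walk_len x s <= d x y + walk_len y s.
Proof.
case: s => [|z s] /=; first by rewrite addr0 metric_ge0.
by rewrite addrA lerD2r metric_triangle.
Qed.

Lemma walk_len_filter (P : pred V) x s t : walk_len x (filter P s ++ t) <= walk_len x (s ++ t).
Proof.
elim: s x => [|y s IHs] x //=; case: (P y) => /=; first by rewrite lerD2l.
exact: le_trans (IHs x) (walk_len_via _ _ _).
Qed.

Lemma tour_len_catC s1 s2 : tour_len (s1 ++ s2) = tour_len (s2 ++ s1).
Proof.
case: s1 => [|a s1]; first by rewrite cats0.
case: s2 => [|b s2]; first by rewrite cats0.
rewrite /tour_len /= !last_cat /= !walk_len_cat /=.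
by rewrite addrA [RHS]addrA addrC.
Qed.

Lemma tour_len_cons z t : tour_len (z :: t) = walk_len z (rcons t z).
Proof. by rewrite /tour_len /= -cats1 walk_len_cat /= addr0 addrC. Qed.

Lemma tour_len_join a A b B :
  tour_len ((a :: A) ++ (b :: B)) <= tour_len (a :: A) + tour_len (b :: B) + (d a b + d a b).
Proof.
rewrite /tour_len /= last_cat /= walk_len_cat /=.
set la := last a A; set lb := last b B; set wA := walk_len a A; set wB := walk_len b B.
have lb_a : d lb a <= d lb b + d a b by rewrite [d a b]metric_sym metric_triangle.
have la_b : d la b <= d la a + d a b := metric_triangle _ _ _.
by lra.
Qed.

Definition tour_partition (ts : seq (seq V)) := forall x, count (fun t => x \in t) ts = 1%N.

Definition in_one_tour (ts : seq (seq V)) (e : {set V}) := exists2 t, t \in ts & {subset e <= t}.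

Lemma tour_partition_has ts x : tour_partition ts -> exists2 t, t \in ts & x \in t.
Proof. by move=> /(_ x) ts_x; apply/hasP; rewrite has_count ts_x. Qed.

Lemma tour_partition_eq ts x t1 t2 : tour_partition ts ->
  t1 \in ts -> t2 \in ts -> x \in t1 -> x \in t2 -> t1 = t2.
Proof.
move=> /(_ x) ts_x t1s t2s xt1 xt2; apply/eqP; apply: contraT => t12.
have : has (fun t => x \in t) (rem t1 ts) by apply/hasP; exists t2; rewrite // rem_mem // eq_sym.
by rewrite has_count count_rem ts_x t1s xt1.
Qed.

Lemma tour_partition_join ts a b : tour_partition ts -> exists ts', [/\ tour_partition ts',
    forall e, in_one_tour ts e -> in_one_tour ts' e, in_one_tour ts' [set a; b] &
    \sum_(t <- ts') tour_len t <= \sum_(t <- ts) tour_len t + (d a b + d a b)].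
Proof.
move=> part; have [ta tas ata] := tour_partition_has a part.
have [tb tbs btb] := tour_partition_has b part.
have [tab_eq|tab] := eqVneq ta tb.
  exists ts; split=> //; last by rewrite lerDl addr_ge0 ?metric_ge0.
  by rewrite -tab_eq in btb; exists ta => // x /set2P[->|->].
have [sa1 [sa2 ta_eq]] : exists s1 s2, ta = s1 ++ a :: s2.
  by case/splitPr: ata => s1 s2; exists s1, s2.
have [sb1 [sb2 tb_eq]] : exists s1 s2, tb = s1 ++ b :: s2.
  by case/splitPr: btb => s1 s2; exists s1, s2.
set rest := rem tb (rem ta ts).
have ts_perm : perm_eq ts (ta :: tb :: rest).
  by apply: perm_trans (perm_to_rem tas) _; rewrite perm_cons perm_to_rem // rem_mem // eq_sym.
set A := sa2 ++ sa1; set B := sb2 ++ sb1.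
have mem_A : a :: A =i ta by move=> x; rewrite ta_eq /A -cat_cons !mem_cat orbC.
have mem_B : b :: B =i tb by move=> x; rewrite tb_eq /B -cat_cons !mem_cat orbC.
have len_A : tour_len (a :: A) = tour_len ta by rewrite /A -cat_cons tour_len_catC ta_eq.
have len_B : tour_len (b :: B) = tour_len tb by rewrite /B -cat_cons tour_len_catC tb_eq.
clearbody A B; set AB := (a :: A) ++ b :: B.
have mem_AB x : (x \in AB) = (x \in ta) || (x \in tb) by rewrite mem_cat mem_A mem_B.
have len_AB := tour_len_join a A b B; rewrite -/AB len_A len_B in len_AB; clearbody AB.
exists (AB :: rest); split.
- move=> x; have := part x; rewrite (permP ts_perm) /= mem_AB.
  by case: (x \in ta); case: (x \in tb).
- move=> e [t]; rewrite (perm_mem ts_perm) !inE => /or3P[/eqP->|/eqP->|trest] et.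
  + by exists AB; rewrite ?mem_head // => x /et; rewrite mem_AB => ->.
  + by exists AB; rewrite ?mem_head // => x /et; rewrite mem_AB => ->; rewrite orbT.
  + by exists t => //; rewrite inE trest orbT.
- by exists AB; rewrite ?mem_head // => x /set2P[->|->]; rewrite mem_AB ?ata ?btb ?orbT.
- by rewrite (perm_big _ ts_perm) !big_cons /=; lra.
Qed.

Lemma exists_tour_partition (es : seq {set V}) : all (@is_edge V) es -> exists ts,
  [/\ tour_partition ts, {in es, forall e, in_one_tour ts e} &
      \sum_(t <- ts) tour_len t <= 2%:R * \sum_(e <- es) edge_w d e].
Proof.
elim: es => [_|e es IHes /andP[/cards2P[a [b [ab ->]]] /IHes[ts [part ts_es len_ts]]]].
  exists [seq [:: x] | x <- enum V]; split=> //.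
    move=> x; have <- : count_mem x (enum V) = 1%N.
      by rewrite count_uniq_mem ?enum_uniq ?mem_enum.
    by rewrite count_map; apply: eq_count => y; rewrite /= inE eq_sym.
  by rewrite big_map big_nil mulr0 big1 // => x _; rewrite /tour_len /= metric_refl addr0.
have [ts' [part' ts'_ts ts'_ab len_ts']] := tour_partition_join a b part.
exists ts'; split=> //.
  by move=> f; rewrite inE => /orP[/eqP->//|/ts_es/ts'_ts].
apply: le_trans len_ts' _; rewrite big_cons edge_w_set2 // mulrDr addrC.
by rewrite lerD // mulr_natl mulr2n.
Qed.

Definition walk_edges (s : seq V) : seq (V * V) := zip s (behead s).

Lemma mem_walk_edges s p : p \in walk_edges s -> (p.1 \in s) && (p.2 \in s).
Proof.
case: s => [//|x s]; elim: s x => [//|y s IHs] x.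
rewrite /walk_edges /= inE => /orP[/eqP->|/IHs/andP[p1 p2]]; first by rewrite !inE !eqxx orbT.
by apply/andP; split; apply: (@mem_behead _ (x :: y :: s)).
Qed.

Lemma sum_walk_edges x s : \sum_(p <- walk_edges (x :: s)) d p.1 p.2 = walk_len x s.
Proof. by elim: s x => [|y s IHs] x; rewrite /walk_edges /= ?big_nil // big_cons IHs. Qed.

Lemma walk_connect (e : rel V) h s :
  (forall p, p \in walk_edges (h :: s) -> connect e p.1 p.2) ->
  {in h :: s, forall x, connect e h x}.
Proof.
elim: s h => [|y s IHs] h e_s x; first by rewrite inE => /eqP->.
rewrite inE => /orP[/eqP->//|xs]; apply: connect_trans (e_s (h, y) _) (IHs y _ x xs).
  by rewrite mem_head.
by move=> p ps; apply: e_s; rewrite inE ps orbT.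
Qed.

Section Shortcut.
Variables near far : pred V.
Hypothesis near_root : near r.
Hypothesis near_not_far : forall x, near x -> ~~ far x.
Hypothesis root_closer : forall w z, near w -> far z -> d w r <= d w z.

Definition open_tour (t : seq V) : seq V :=
  if has far t then drop (find far t).+1 t ++ take (find far t) t else t.

Definition shortcut (t : seq V) : seq V :=
  if has far t then r :: filter near (open_tour t) else filter near t.

Lemma open_tourP t : has far t ->
  exists2 z, far z & tour_len t = tour_len (z :: open_tour t) /\ t =i z :: open_tour t.
Proof.
move=> t_far; rewrite /open_tour t_far; set i := find far t.
have t_eq : t = take i t ++ nth r t i :: drop i.+1 t.
  by rewrite -drop_nth ?cat_take_drop // -has_find.
exists (nth r t i); first exact: nth_find.
split; first by rewrite {1}t_eq tour_len_catC.
by move=> x; rewrite {1}t_eq !(mem_cat, inE) orbC -orbA.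
Qed.

Lemma walk_len_from_root z s : far z -> all near s -> walk_len r s <= walk_len z s.
Proof.
case: s => [//|x s] /= z_far /andP[x_near _]; rewrite lerD2r.
by rewrite [d r x]metric_sym [d z x]metric_sym root_closer.
Qed.

Lemma shortcut_len t : \sum_(p <- walk_edges (shortcut t)) d p.1 p.2 <= tour_len t.
Proof.
rewrite /shortcut; case: ifPn => [t_far|t_near].
  have [z z_far [-> _]] := open_tourP t_far.
  rewrite sum_walk_edges tour_len_cons -cats1.
  apply: le_trans (walk_len_filter near _ _ _); rewrite walk_len_cat.
  apply: le_trans (walk_len_from_root z_far (filter_all _ _)) _.
  by rewrite lerDl walk_len_ge0.
case: t {t_near} => [|x t]; first by rewrite big_nil.
apply: le_trans (_ : walk_len (last x t) (filter near (x :: t) ++ [::]) <= _).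
  rewrite cats0; case: (filter near _) => [|y s]; first by rewrite big_nil walk_len_ge0.
  by rewrite sum_walk_edges /= lerDr metric_ge0.
by have := walk_len_filter near (last x t) (x :: t) [::]; rewrite !cats0.
Qed.

Lemma shortcut_near t x : x \in shortcut t -> near x.
Proof.
rewrite /shortcut; case: ifP => _; rewrite ?inE ?mem_filter; last by case/andP.
by case/orP => [/eqP->|/andP[]].
Qed.

Lemma mem_shortcut t x : x \in t -> near x -> x \in shortcut t.
Proof.
rewrite /shortcut; case: ifPn => [t_far|_] xt x_near; last by rewrite mem_filter x_near.
have [z z_far [_ /(_ x)]] := open_tourP t_far; rewrite xt inE => /esym/orP[/eqP xz|x_open].
  by move: (near_not_far x_near); rewrite xz z_far.
by rewrite inE mem_filter x_near x_open orbT.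
Qed.

Lemma root_in_shortcut t : has far t -> r \in shortcut t.
Proof. by rewrite /shortcut => ->; apply: mem_head. Qed.

End Shortcut.

(** * Part (b): the level trees against a tree of a contraction *)

Definition pair_edges (ps : seq (V * V)) : {set {set V}} :=
  [set e | is_edge e && has (fun p => e == [set p.1; p.2]) ps].

Lemma wF_pair_edges ps : wF d (pair_edges ps) <= \sum_(p <- ps) d p.1 p.2.
Proof.
elim: ps => [|p ps IHps].
  by rewrite big_nil /wF big_pred0 // => e; rewrite inE andbF.
have sub : pair_edges (p :: ps) \subset [set p.1; p.2] |: pair_edges ps.
  apply/subsetP => e; rewrite !inE /= => /andP[-> /orP[->|->]]; rewrite ?orbT //.
apply: le_trans (wF_subset sub) _; apply: le_trans (wF_setU1 _ _) _.
by rewrite big_cons lerD ?edge_w_set2_le.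
Qed.

Lemma connect_pair_edges (W U : {set V}) ps p : p \in ps -> p.1 \in W -> p.2 \in W ->
  connect (crel W U (pair_edges ps)) p.1 p.2.
Proof.
move=> pps p1W p2W; have [->|p12] := eqVneq p.1 p.2; first exact: connect0.
apply: connect1; rewrite /crel p1W p2W !inE is_edge_set2 p12 /=.
by apply/orP; left; apply/hasP; exists p.
Qed.

Definition touches_level (j : nat) (e : {set V}) : bool :=
  [exists x in e, (level x == j) || (level x == j.+1)].

Definition level_edges (j : nat) (T : {set {set V}}) : {set {set V}} :=
  [set e in T | touches_level j e].

Section LevelBound.
Variables (i j : nat) (T : {set {set V}}).
Hypothesis T_st : is_st [set: V] (V_lt d r M i) T.
Hypothesis le_ij : (i <= j)%N.

Local Notation near := (fun x => level x <= j)%N.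
Local Notation far := (fun x => j.+2 <= level x)%N.

Lemma level_near_root : near r.
Proof. by rewrite /= level_root. Qed.

Lemma level_near_not_far x : near x -> ~~ far x.
Proof. by move=> x_near; rewrite -ltnNge ltnS (leq_trans x_near) ?leqnSn. Qed.

(* A far vertex lies beyond radius 2^(j+1) M, a near one within 2^j M. *)
Lemma level_root_closer w z : near w -> far z -> d w r <= d w z.
Proof.
move=> w_near z_far; have rw := dist_root_le_radius w_near.
have rz : radius j.+1 < d r z by apply: radius_lt_dist_root.
rewrite radiusS in rz; have := metric_triangle r w z.
by rewrite [d w r]metric_sym; lra.
Qed.

Section Tours.
Variable ts : seq (seq V).
Hypothesis ts_part : tour_partition ts.
Hypothesis ts_edges : forall e, e \in level_edges j T -> in_one_tour ts e.

Local Notation ps := (flatten [seq walk_edges (shortcut near far t) | t <- ts]).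
Local Notation G := (crel (V_le d r M j) (V_lt d r M j) (pair_edges ps)).

Lemma shortcut_connect t x y : t \in ts ->
  x \in shortcut near far t -> y \in shortcut near far t -> connect G x y.
Proof.
move=> tts; case s_eq: (shortcut near far t) => [//|h s] xs ys.
have near_s z : z \in h :: s -> z \in V_le d r M j.
  by rewrite mem_V_le -s_eq => /(shortcut_near level_near_root).
have h_s : {in h :: s, forall z, connect G h z}.
  apply: walk_connect => p ph; have /andP[p1 p2] := mem_walk_edges ph.
  apply: connect_pair_edges (near_s _ p1) (near_s _ p2).
  by apply/flattenP; exists (walk_edges (h :: s)) => //; rewrite -s_eq; apply/mapP; exists t.
by apply: connect_trans (h_s y ys); rewrite connect_crel_sym h_s.
Qed.

Definition tour_rooted y := forall t, t \in ts -> y \in t ->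
  forall x, x \in t -> near x -> connect G x r.

Lemma near_tour_rooted y : near y -> connect G y r -> tour_rooted y.
Proof.
move=> y_near yr t tts yt x xt x_near; apply: connect_trans yr.
by apply: shortcut_connect tts _ _; apply: (mem_shortcut level_near_not_far).
Qed.

Lemma far_tour_rooted t x : t \in ts -> has far t -> x \in t -> near x -> connect G x r.
Proof.
move=> tts t_far xt x_near; apply: shortcut_connect tts _ (root_in_shortcut _ t_far).
exact: (mem_shortcut level_near_not_far).
Qed.

(* Walking along T towards the root, E_j edges keep us inside one tour. *)
Lemma tour_rooted_step y z : crel [set: V] (V_lt d r M i) T y z ->
  (level y <= j.+1)%N -> ((level z <= j.+1)%N -> tour_rooted z) -> tour_rooted y.
Proof.
move=> /and3P[_ _ yz] y_le z_rooted.
have [lt_yj|le_jy] := ltnP (level y) j.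
  apply: near_tour_rooted (ltnW lt_yj) (connect1 _).
  rewrite /crel !mem_V_le !mem_V_lt level_root (ltnW lt_yj) lt_yj.
  by rewrite (leq_ltn_trans _ lt_yj) ?orbT.
have {}yz : [set y; z] \in T.
  by case/orP: yz => // /andP[]; rewrite mem_V_lt ltnNge (leq_trans le_ij le_jy).
have yz_j : [set y; z] \in level_edges j T.
  rewrite inE yz; apply/existsP; exists y; rewrite set21 /= eqn_leq le_jy.
  by move: y_le; rewrite leq_eqVlt ltnS => /orP[->|->]; rewrite ?orbT.
have [t0 t0s /[dup] yz_t0 /(_ y (set21 y z)) yt0] := ts_edges yz_j.
have zt0 := yz_t0 z (set22 y z).
move=> t tts yt; rewrite -(tour_partition_eq ts_part t0s tts yt0 yt).
have [z_le|z_far] := leqP (level z) j.+1; first exact: z_rooted.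
by move=> x xt0 x_near; apply: far_tour_rooted t0s _ xt0 x_near; apply/hasP; exists z.
Qed.

Lemma near_connect_root x : near x -> connect G x r.
Proof.
move=> x_near; have [t tts xt] := tour_partition_has x ts_part.
have [_ T_span _] := T_st.
have : (level x <= j.+1)%N -> tour_rooted x.
  apply: (connect_backward_ind (P := fun y => (level y <= j.+1)%N -> tour_rooted y))
    (T_span x r (in_setT x) (in_setT r)).
  - by move=> y z yz z_rooted y_le; apply: tour_rooted_step yz y_le z_rooted.
  - by move=> _; apply: near_tour_rooted (connect0 _ _); rewrite /= level_root.
by move/(_ (leqW x_near) t tts xt x xt x_near).
Qed.

Lemma shortcut_tours_span x y : x \in V_le d r M j -> y \in V_le d r M j -> connect G x y.
Proof.
rewrite !mem_V_le => x_near y_near; apply: connect_trans (near_connect_root x_near) _.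
by rewrite connect_crel_sym near_connect_root.
Qed.

Lemma shortcut_tours_edges e : e \in pair_edges ps -> is_edge e && (e \subset V_le d r M j).
Proof.
rewrite inE => /andP[-> /hasP[p /flattenP[_ /mapP[t tts ->]] pt /eqP->]] /=.
have : (p.1 \in shortcut near far t) && (p.2 \in shortcut near far t).
  exact: mem_walk_edges pt.
case/andP=> /(shortcut_near level_near_root) p1 /(shortcut_near level_near_root) p2.
by apply/subsetP => x /set2P[->|->]; rewrite mem_V_le.
Qed.

End Tours.

Lemma wF_mst_le_level_edges Hj : is_mst d (V_le d r M j) (V_lt d r M j) Hj ->
  wF d Hj <= 2%:R * wF d (level_edges j T).
Proof.
move=> Hj_mst; have edges_T : all (@is_edge V) (enum (level_edges j T)).
  by apply/allP => e; rewrite mem_enum inE => /andP[eT _]; have [/(_ e eT)/andP[]] := T_st.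
have [ts [ts_part ts_edges ts_len]] := exists_tour_partition edges_T.
have {}ts_edges e : e \in level_edges j T -> in_one_tour ts e.
  by rewrite -mem_enum; apply: ts_edges.
have := mst_wF_le Hj_mst (shortcut_tours_edges (ts := ts)) (shortcut_tours_span ts_part ts_edges).
move/le_trans; apply.
apply: le_trans (wF_pair_edges _) _; rewrite /wF -big_enum /=; apply: le_trans ts_len.
rewrite big_flatten big_map; apply: ler_sum => t _; exact: (shortcut_len level_root_closer).
Qed.

End LevelBound.

Lemma sum_touches_level_le e m n : is_edge e -> (\sum_(m <= j < n) touches_level j e <= 4)%N.
Proof.
case/cards2P => a [b [_ ->]].
apply: (sum_iota_pred_le_size (s := [:: level a; (level a).-1; level b; (level b).-1])) => j.
by case/existsP => x /andP[/set2P[->|->] /orP[/eqP<-|/eqP->]]; rewrite !inE /= eqxx ?orbT.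
Qed.

Lemma wF_level_edges j (T : {set {set V}}) :
  wF d (level_edges j T) = \sum_(e in T) edge_w d e * (touches_level j e)%:R.
Proof.
rewrite /wF (eq_bigl (fun e => (e \in T) && touches_level j e)) => [|e]; last by rewrite inE.
by rewrite big_mkcondr; apply: eq_bigr => e _; case: touches_level; rewrite ?mulr1 ?mulr0.
Qed.

Lemma sum_wF_level_edges_le (T : {set {set V}}) m n : (forall e, e \in T -> is_edge e) ->
  \sum_(m <= j < n) wF d (level_edges j T) <= 4%:R * wF d T.
Proof.
move=> T_edges; under eq_bigr do rewrite wF_level_edges.
rewrite exchange_big /= /wF mulr_sumr; apply: ler_sum => e eT.
rewrite -mulr_sumr mulrC ler_wpM2r ?edge_w_ge0 // -natr_sum ler_nat.
exact: sum_touches_level_le (T_edges e eT).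
Qed.

End LevelPrim.

Theorem theorem2 (R : archiRealFieldType) (V : finType) (d : V -> V -> R) (r : V) (M : R)
    (H : nat -> {set {set V}}) :
  is_metric d -> 0 < M ->
  (forall i, is_mst d (V_le d r M i) (V_lt d r M i) (H i)) ->
  (* (a) *)
  (is_st [set: V] set0 (Hunion H) /\
   forall (p : seq V),
     path (fun x y => [set x; y] \in Hunion H) r p -> uniq (r :: p) ->
     is_leaf (Hunion H) (last r p) ->
     levels_nondecr d r M (r :: p))
  /\
  (* (b) *)
  (forall (i : nat) (T : {set {set V}}), is_st [set: V] (V_lt d r M i) T ->
     forall n : nat, \sum_(i <= j < n) wF d (H j) <= 8%:R * wF d T).
Proof.
move=> d_metric M_gt0 H_mst; split.
  split; first exact: (Hunion_is_st (M := M) d_metric M_gt0 H_mst).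
  (* Levels are non-decreasing along every simple path from r, leaf or not. *)
  by move=> p rp rp_uniq _; apply: (Hpath_levels_nondecr (M := M) d_metric M_gt0 H_mst).
move=> i T T_st n.
apply: (@le_trans _ _ (\sum_(i <= j < n) 2%:R * wF d (level_edges r d_metric M_gt0 j T))).
  apply: ler_sum_nat => j /andP[le_ij _].
  exact: (wF_mst_le_level_edges (M := M) d_metric M_gt0 T_st le_ij (H_mst j)).
have T_edges e : e \in T -> is_edge e by have [T_edges _ _] := T_st; case/T_edges/andP.
rewrite -mulr_sumr; have := sum_wF_level_edges_le r (M := M) d_metric M_gt0 i n T_edges.
lra.
Qed.
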